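(* The graph of the 3-dimensional cube (8 vertices, 3-regular) and the graph of the pentagonal prism (10 vertices: two 5-cycles $u_0\cdots u_4$ and $w_0\cdots w_4$ together with the edges $u_iw_i$) are both B-factorizable.
   Context: Let $V$ be a finite set with $|V|$ even. $K=\binom{V}{2}$ is the set of 2-element subsets of $V$. An equal partition of $V$ is an unordered pair $\{H,A\}$ of disjoint subsets with $H\cup A=V$ and $|H|=|A|=|V|/2$; $C=C(V)$ is the set of equal partitions. For $c=\{H,A\}\in C$, $B_c$ is the complete bipartite graph with parts $H$ and $A$. Vectors live in $\mathbb N^{K\cup C}$ with $\mathbb N=\{0,1,2,\dots\}$; $v|_K$ denotes the restriction to coordinates in $K$. For $E\subseteq K$, $\chi_E\in\{0,1\}^K$ is its indicator vector. For $E\subseteq K$ and $c\in C$, $\chi_{E,c}\in\mathbb N^{K\cup C}$ has $K$-components $\chi_E$ and $C$-components equal to the indicator of $c$. $PM(V)=\{\chi_{q,c}: c\in C,\ q\text{ a perfect matching of }B_c\}$. For $\mathcal M\subseteq\mathbb N^{K\cup C}$, $\mathbf N(\mathcal M)$ is the set of finite nonnegative integer combinations of elements of $\mathcal M$, and $\overline{\mathbf N}(\mathcal M)=\{v\in\mathbb N^{K\cup C}: kv\in\mathbf N(\mathcal M)\text{ for some integer }k\ge1\}$. A regular graph $G=(V,E)$ is B-factorizable if every $v\in\overline{\mathbf N}(PM(V))$ with $v|_K=\chi_E$ belongs to $\mathbf N(PM(V))$. *)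

From HB Require Import structures.
From mathcomp Require Import all_boot.
Set Implicit Arguments. Unset Strict Implicit. Unset Printing Implicit Defensive.

Section BFact.
Variable V : finType.

Definition Kt := {e : {set V} | #|e| == 2}.

Definition is_eqpart (c : {set {set V}}) : bool :=
  [exists H : {set V}, (c == [set H; ~: H]) && (#|H|.*2 == #|V|)].

Definition Ct := {c : {set {set V}} | is_eqpart c}.

Definition vec := {ffun (Kt + Ct)%type -> nat}.

(* e is an edge of the complete bipartite graph B_c *)
Definition bip_edge (c : Ct) (e : Kt) : bool :=
  [forall P in val c, #|val e :&: P| == 1].

Definition is_pm (c : Ct) (q : {set Kt}) : bool :=
  [forall e in q, bip_edge c e] &&
  [forall x : V, #|[set e in q | x \in val e]| == 1].

Definition chiEc (E : {set Kt}) (c : Ct) : vec :=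
  [ffun x => match x with inl e => nat_of_bool (e \in E)
                        | inr d => nat_of_bool (d == c) end].

Definition in_PM (v : vec) : Prop :=
  exists (c : Ct) (q : {set Kt}), is_pm c q /\ v = chiEc q c.

Definition vsum (s : seq vec) : vec := [ffun x => \sum_(w <- s) w x].
Definition vscale (k : nat) (v : vec) : vec := [ffun x => k * v x].

(* N(M): finite nonnegative integer combinations (= finite sums with repetition) *)
Definition Ncomb (M : vec -> Prop) (v : vec) : Prop :=
  exists s : seq vec, (forall w, w \in s -> M w) /\ v = vsum s.

Definition Nbar (M : vec -> Prop) (v : vec) : Prop :=
  exists k : nat, 1 <= k /\ Ncomb M (vscale k v).

Definition regular (E : {set Kt}) : Prop :=
  exists d : nat, forall x : V, #|[set e in E | x \in val e]| = d.

Definition B_factorizable (E : {set Kt}) : Prop :=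
  regular E /\
  forall v : vec, Nbar in_PM v ->
    (forall e : Kt, v (inl e) = nat_of_bool (e \in E)) -> Ncomb in_PM v.

Definition edges_of (r : rel V) : {set Kt} :=
  [set e : Kt | [exists x : V, exists y : V, (val e == [set x; y]) && r x y]].

End BFact.

Definition cubeV := (bool * bool * bool)%type.
Definition cube_adj : rel cubeV := fun x y =>
  (x.1.1 != y.1.1) + (x.1.2 != y.1.2) + (x.2 != y.2) == 1.
Definition cube_edges : {set Kt cubeV} := edges_of cube_adj.

(* pentagonal prism: (false, i) = u_i, (true, i) = w_i *)
Definition prismV := (bool * 'I_5)%type.
Definition prism_adj : rel prismV := fun x y =>
  ((x.1 == y.1) && ((nat_of_ord y.2 == (x.2 + 1) %% 5) || (nat_of_ord x.2 == (y.2 + 1) %% 5)))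
  || ((x.1 != y.1) && (x.2 == y.2)).
Definition prism_edges : {set Kt prismV} := edges_of prism_adj.

(* Let G = (V, E) be a cubic graph and v a vector of Nbar(PM(V)) with
   v|_K = chi_E, say k v = sum of vectors chi_{q,c}.  Every q occurring is
   contained in E, so it is a perfect matching of G which is also a perfect
   matching of B_c ("compatible" with c).  If n_j counts the occurrences of
   the j-th perfect matching of G, the edge coordinates say that n covers
   every edge exactly k times, and such an n is a nonnegative combination of
   "generators": the 1-factorizations of G and, for both graphs at hand, one
   family of six matchings covering every edge twice.  Counting terms, the
   partition coordinates of v form a multiset {c1, c2, c3}.  Finally, for the
   lists of matchings compatible with c1, c2, c3, either some 1-factorization
   F1, F2, F3 has F_i compatible with c_i, and then v is the sum of the three
   vectors chi_{F_i,c_i}, or a weighted Hall-type count shows that no such n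
   exists. *)

From HB Require Import structures.
From Stdlib Require Import Lia.
From mathcomp Require Import all_boot zify.
Set Implicit Arguments. Unset Strict Implicit. Unset Printing Implicit Defensive.

Lemma card_uniq_cover (T : finType) (s : seq T) (P : pred T) :
  uniq s -> (forall x, P x -> x \in s) -> #|P| = count P s.
Proof.
move=> us sub; rewrite -size_filter -(card_uniqP (filter_uniq P us)).
apply: eq_card => x; rewrite mem_filter.
by case Px: (P x) => //=; rewrite (sub x Px).
Qed.

Fixpoint bitseqs (n : nat) : seq bitseq :=
  if n is n'.+1 then [seq true :: b | b <- bitseqs n'] ++ [seq false :: b | b <- bitseqs n']
  else [:: [::]].

Lemma mem_bitseqs n b : size b = n -> b \in bitseqs n.
Proof.
elim: n b => [|n IH] [|x b] //= [sb].
by rewrite mem_cat; case: x; rewrite map_f ?orbT ?IH.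
Qed.

Lemma sum_bool_count (T : Type) (s : seq T) (P : pred T) :
  \sum_(x <- s) (P x : nat) = count P s.
Proof. by rewrite -sumn_count sumnE big_map. Qed.

Lemma sub_in_count (T : eqType) (a1 a2 : pred T) (s : seq T) :
  {in s, subpred a1 a2} -> count a1 s <= count a2 s.
Proof.
move=> sub; rewrite -(@eq_in_count _ (fun x => a1 x && (x \in s))); last first.
  by move=> x ->; rewrite andbT.
by apply: sub_count => x /andP[a1x xs]; apply: sub xs a1x.
Qed.

Lemma sum_by_value p (s : seq nat) (F : nat -> nat) : all (fun x => x < p) s ->
  \sum_(x <- s) F x = \sum_(j < p) count_mem (j : nat) s * F j.
Proof.
move=> /allP sp; transitivity (\sum_(x <- s) \sum_(j < p) (x == j) * F j).
  rewrite big_seq [RHS]big_seq; apply: eq_bigr => x xs.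
  rewrite (bigD1 (Ordinal (sp x xs))) //= eqxx mul1n big1 ?addn0 // => j.
  by rewrite -val_eqE /= eq_sym => /negbTE->.
rewrite exchange_big; apply: eq_bigr => j _.
by rewrite -big_distrl /= -sum_bool_count.
Qed.

Lemma count_by_value (T : finType) (s : seq T) (P : pred T) :
  count P s = \sum_(c | P c) count_mem c s.
Proof.
elim: s => [|x s IH] /=; first by rewrite big1.
rewrite IH big_split /=; congr (_ + _).
case Px: (P x).
  rewrite (bigD1 x) //= eqxx big1 // => c /andP[_ /negbTE]; by rewrite eq_sym => ->.
by rewrite big1 // => c Pc; case: eqP => // xc; rewrite xc Pc in Px.
Qed.

Lemma multiset_of_counts (T : finType) (f : T -> nat) :
  exists2 cs : seq T, size cs = \sum_t f t & forall t, count_mem t cs = f t.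
Proof.
exists (flatten [seq nseq (f u) u | u <- enum T]).
  rewrite size_flatten /shape -map_comp sumnE big_map big_enum.
  by apply: eq_bigr => u _; rewrite /= size_nseq.
move=> t; rewrite count_flatten -map_comp sumnE big_map big_enum /=.
rewrite (bigD1 t) //= count_nseq /= eqxx mul1n big1 ?addn0 // => u ut.
by rewrite count_nseq /= (negbTE ut).
Qed.

Lemma lift_seq (A : Type) (B : eqType) (P : pred A) (f : A -> B) (s : seq B) :
  (forall w, w \in s -> exists2 x, P x & w = f x) -> exists2 L, all P L & s = map f L.
Proof.
elim: s => [|w s IH] Hw; first by exists [::].
have [x Px ->] := Hw w (mem_head _ _).
have [w' w's|L PL ->] := IH; first by apply: Hw; rewrite inE w's orbT.
by exists (x :: L); rewrite /= ?Px ?PL.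
Qed.

Lemma mem_drop_index (T : eqType) (s : seq T) x y :
  y \in s -> index x s <= index y s -> y \in drop (index x s) s.
Proof.
move=> ys le_xy; rewrite -(nth_index y ys) -(subnKC le_xy) -nth_drop mem_nth //.
by rewrite size_drop ltn_sub2r ?index_mem // -index_mem (leq_ltn_trans le_xy) ?index_mem.
Qed.

Fixpoint fits (F : seq nat) (A : seq (seq nat)) : bool :=
  if A is B :: A' then has (fun x => (x \in B) && fits (rem x F) A') F else F == [::].

Lemma fitsP F A : fits F A -> exists2 s, perm_eq s F & all2 (fun j B => j \in B) s A.
Proof.
elim: A F => [|B A IH] F /=; first by move=> /eqP->; exists [::].
case/hasP=> x xF /andP[xB /IH[s perm_s fit_s]]; exists (x :: s); last by rewrite /= xB.
by rewrite -(perm_cons x) in perm_s; apply: (perm_trans perm_s); rewrite perm_sym perm_to_rem.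
Qed.

Lemma mem_zip_snd (S T : eqType) (s : seq S) (t : seq T) x : x \in zip s t -> x.2 \in t.
Proof.
elim: s t => [|a s IH] [|b t] //=; rewrite !inE => /orP[/eqP-> | /IH ->].
  by rewrite eqxx.
by rewrite orbT.
Qed.

Lemma zip_mapr (S T U : Type) (f : T -> U) (s : seq S) (t : seq T) :
  zip s (map f t) = [seq (x.1, f x.2) | x <- zip s t].
Proof. by elim: s t => [|x s IH] [|y t] //=; rewrite IH. Qed.

Lemma all2_zip (S T : eqType) (U : Type) (r : S -> U -> bool) (f : T -> U)
    (s1 : seq S) (s2 : seq T) l :
  all2 r s1 (map f s2) -> l \in zip s1 s2 -> r l.1 (f l.2).
Proof.
elim: s1 s2 => [|x s1 IH] [|y s2] //= /andP[rxy H]; rewrite inE => /orP[/eqP->|] //.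
exact: IH.
Qed.

(* The seven nonempty subsets of a three-element set, as bit masks. *)
Definition masks : seq bitseq :=
  [:: [:: true; true; true]; [:: true; true; false]; [:: true; false; true];
      [:: false; true; true]; [:: true; false; false]; [:: false; true; false];
      [:: false; false; true]].

Lemma size_masks mk : mk \in masks -> size mk = 3.
Proof. by move/(allP (isT : all (fun mk => size mk == 3) masks))/eqP. Qed.

Definition mask_union (A : seq (seq nat)) (mk : bitseq) (j : nat) : bool :=
  has (fun B => j \in B) (mask mk A).

Definition wdot (w vals : seq nat) : nat := sumn [seq x.1 * x.2 | x <- zip w vals].
Definition wsum (w : seq nat) (f : bitseq -> nat) : nat := wdot w (map f masks).

Lemma wsumE w f : wsum w f = \sum_(x <- zip w masks) x.1 * f x.2.
Proof. by rewrite /wsum /wdot zip_mapr -map_comp sumnE big_map. Qed.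

(* The weight vectors tried as Hall certificates: each single mask, and the
   full mask (the first of [masks]) together with each other one. *)
Definition mask_weights : seq (seq nat) :=
  [:: [:: 1; 0; 0; 0; 0; 0; 0]; [:: 0; 1; 0; 0; 0; 0; 0]; [:: 0; 0; 1; 0; 0; 0; 0];
      [:: 0; 0; 0; 1; 0; 0; 0]; [:: 0; 0; 0; 0; 1; 0; 0]; [:: 0; 0; 0; 0; 0; 1; 0];
      [:: 0; 0; 0; 0; 0; 0; 1]; [:: 1; 1; 0; 0; 0; 0; 0]; [:: 1; 0; 1; 0; 0; 0; 0];
      [:: 1; 0; 0; 1; 0; 0; 0]; [:: 1; 0; 0; 0; 1; 0; 0]; [:: 1; 0; 0; 0; 0; 1; 0];
      [:: 1; 0; 0; 0; 0; 0; 1]].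

Lemma eq_wsum w (f g : bitseq -> nat) : f =1 g -> wsum w f = wsum w g.
Proof. by move=> fg; rewrite /wsum (eq_map fg). Qed.

Lemma wsum_mul k w f : k * wsum w f = wsum w (fun mk => k * f mk).
Proof. by rewrite !wsumE big_distrr; apply: eq_bigr => x _; rewrite mulnCA. Qed.

Lemma sum_wsum (I : Type) (r : seq I) w (f : I -> bitseq -> nat) :
  \sum_(i <- r) wsum w (f i) = wsum w (fun mk => \sum_(i <- r) f i mk).
Proof.
rewrite wsumE; under eq_bigr => i _ do rewrite wsumE.
by rewrite exchange_big; apply: eq_bigr => x _; rewrite big_distrr.
Qed.

Lemma leq_wsum w (f g : bitseq -> nat) :
  (forall mk, mk \in masks -> f mk <= g mk) -> wsum w f <= wsum w g.
Proof.
move=> fg; rewrite !wsumE big_seq [X in _ <= X]big_seq; apply: leq_sum => x xz.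
by rewrite leq_mul2l fg ?orbT // (mem_zip_snd xz).
Qed.

Section CubicGraph.
Variables (V : finType) (adj : rel V).
Variables (verts : seq V) (elist : seq (V * V)) (e0 : Kt V) (x0 : V).
Hypothesis verts_all : forall x, x \in verts.
Hypothesis verts_uniq : uniq verts.
Hypothesis elist_adj : all (fun p => (p.1 != p.2) && adj p.1 p.2) elist.
Hypothesis elist_complete : all (fun x => all (fun y => adj x y ==>
  has (fun p => ((p.1 == x) && (p.2 == y)) || ((p.1 == y) && (p.2 == x))) elist) verts) verts.

Let E := edges_of adj.
Let m := size elist.
Let end1 i := (nth (x0, x0) elist i).1.
Let end2 i := (nth (x0, x0) elist i).2.

Definition incident (x : V) (i : nat) : bool := (x == end1 i) || (x == end2 i).

(* The list has no repeated edge: edge [i] is the first one with its endpoints. *)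
Hypothesis elist_index :
  all (fun i => find (fun p => incident p.1 i && incident p.2 i) elist == i) (iota 0 m).

Definition edge_code (e : Kt V) : nat :=
  find (fun p => (p.1 \in val e) && (p.2 \in val e)) elist.
Definition edge_of (i : nat) : Kt V := insubd e0 [set end1 i; end2 i].

Lemma endpoints_neq i : i < m -> end1 i != end2 i.
Proof. by move=> im; have /andP[] := all_nthP (x0, x0) elist_adj i im. Qed.

Lemma endpoints_adj i : i < m -> adj (end1 i) (end2 i).
Proof. by move=> im; have /andP[] := all_nthP (x0, x0) elist_adj i im. Qed.

Lemma val_edge_of i : i < m -> val (edge_of i) = [set end1 i; end2 i].
Proof. by move=> im; rewrite /edge_of val_insubd cards2 endpoints_neq. Qed.

Lemma mem_edge_of x i : i < m -> (x \in val (edge_of i)) = incident x i.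
Proof. by move=> im; rewrite val_edge_of // in_set2. Qed.

Lemma edge_ofK i : i < m -> edge_code (edge_of i) = i.
Proof.
move=> im; have /eqP first_i : find (fun p => incident p.1 i && incident p.2 i) elist == i.
  by apply: (allP elist_index); rewrite mem_iota.
by rewrite /edge_code -{3}first_i; apply: eq_find => p; rewrite !mem_edge_of.
Qed.

Lemma edge_of_in i : i < m -> edge_of i \in E.
Proof.
move=> im; rewrite inE; apply/existsP; exists (end1 i); apply/existsP; exists (end2 i).
by rewrite val_edge_of // eqxx endpoints_adj.
Qed.

Lemma edge_code_lt e : e \in E -> edge_code e < m.
Proof.
rewrite inE => /existsP[x /existsP[y /andP[/eqP ve xy]]].
have hp := implyP (allP (allP elist_complete x (verts_all x)) y (verts_all y)) xy.
rewrite /edge_code -has_find; apply: sub_has hp => p.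
by rewrite ve !in_set2 => /orP[]/andP[/eqP-> /eqP->]; rewrite !eqxx ?orbT.
Qed.

Lemma edge_codeK e : e \in E -> edge_of (edge_code e) = e.
Proof.
move=> eE; have cm := edge_code_lt eE.
have hh : has (fun p => (p.1 \in val e) && (p.2 \in val e)) elist by rewrite has_find.
have /andP[ha hb] := nth_find (x0, x0) hh.
apply: val_inj; rewrite val_edge_of //; apply/eqP.
rewrite eqEcard cards2 endpoints_neq //; have := valP e; rewrite /= => /eqP->.
by rewrite andbT; apply/subsetP => x; rewrite in_set2 => /orP [] /eqP ->.
Qed.

Lemma card_edges (R : pred (Kt V)) : (forall e, R e -> e \in E) ->
  #|R| = count (fun i => R (edge_of i)) (iota 0 m).
Proof.
move=> RE; rewrite (@card_uniq_cover _ (map edge_of (iota 0 m))) ?count_map //.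
  rewrite map_inj_in_uniq ?iota_uniq // => i j; rewrite !mem_iota /= !add0n.
  by move=> im jm eij; rewrite -(edge_ofK im) eij edge_ofK.
move=> e /RE eE; rewrite -(edge_codeK eE) map_f // mem_iota /= add0n edge_code_lt //.
Qed.

Lemma degree_count (q : {set Kt V}) x : q \subset E ->
  #|[set e in q | x \in val e]| = count (fun i => (edge_of i \in q) && incident x i) (iota 0 m).
Proof.
move=> qE; rewrite (@card_edges (mem [set e in q | x \in val e])).
  by apply: eq_in_count => i; rewrite mem_iota /= add0n => im; rewrite inE mem_edge_of.
move=> e He; have : e \in [set e in q | x \in val e] := He.
by rewrite inE => /andP[/(subsetP qE)].
Qed.

Definition perfect_bits (bb : bitseq) : bool :=
  all (fun x => count (fun i => nth false bb i && incident x i) (iota 0 m) == 1) verts.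
Definition bits_set (bb : bitseq) : {set Kt V} :=
  [set e | (e \in E) && nth false bb (edge_code e)].

Lemma edge_of_bits_set bb i : i < m -> (edge_of i \in bits_set bb) = nth false bb i.
Proof. by move=> im; rewrite inE edge_of_in // edge_ofK. Qed.

Lemma bits_set_sub bb : bits_set bb \subset E.
Proof. by apply/subsetP => e; rewrite inE => /andP[]. Qed.

Variable pmbits : seq bitseq.
Let p := size pmbits.
Definition pm (j : nat) : {set Kt V} := bits_set (nth [::] pmbits j).
Definition pm_bit (j i : nat) : bool := nth false (nth [::] pmbits j) i.

Hypothesis pm_listed : all (fun bb => perfect_bits bb ==> (bb \in pmbits)) (bitseqs m).
Hypothesis pm_perfect : all perfect_bits pmbits.

Lemma pm_complete (q : {set Kt V}) : q \subset E ->
  [forall x, #|[set e in q | x \in val e]| == 1] -> exists2 j, j < p & q = pm j.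
Proof.
move=> qE /forallP vq; set bb := [seq edge_of i \in q | i <- iota 0 m].
have nbb i : i < m -> nth false bb i = (edge_of i \in q).
  by move=> im; rewrite /bb (nth_map 0) ?size_iota // nth_iota.
have bbP : perfect_bits bb.
  apply/allP => x _; apply/eqP; rewrite -(eqP (vq x)) degree_count //.
  by apply: eq_in_count => i; rewrite mem_iota add0n => /= im; rewrite nbb.
have bb_in : bb \in pmbits.
  have bbm : size bb = m by rewrite size_map size_iota.
  by have /(allP pm_listed)/implyP := mem_bitseqs bbm; apply.
exists (index bb pmbits); first by rewrite index_mem.
rewrite /pm nth_index //; apply/setP => e; rewrite inE; case eE: (e \in E) => /=.
  by rewrite nbb ?edge_code_lt // edge_codeK.
by apply/negbTE; apply: contraFN eE; apply: (subsetP qE).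
Qed.

Lemma pm_sub j : pm j \subset E.
Proof. exact: bits_set_sub. Qed.

Lemma edge_of_pm j i : i < m -> (edge_of i \in pm j) = pm_bit j i.
Proof. exact: edge_of_bits_set. Qed.

Lemma pm_perfect_matching j : j < p ->
  [forall x, #|[set e in pm j | x \in val e]| == 1].
Proof.
move=> jp; apply/forallP => x; rewrite degree_count ?pm_sub //.
have /allP/(_ x (verts_all x)) := allP pm_perfect _ (mem_nth [::] jp).
rewrite (@eq_in_count _ (fun i => (edge_of i \in pm j) && incident x i)
                        (fun i => pm_bit j i && incident x i)) //.
by move=> i; rewrite mem_iota add0n => /= im; rewrite edge_of_pm.
Qed.

Lemma card2I (x y : V) (H : {set V}) : x != y ->
  (#|[set x; y] :&: H| == 1) = ((x \in H) != (y \in H)).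
Proof.
move=> xy; have u : uniq [seq z <- [:: x; y] | z \in H] by rewrite filter_uniq //= inE xy.
have -> : #|[set x; y] :&: H| = #|[seq z <- [:: x; y] | z \in H]|.
  by apply: eq_card => z; rewrite !inE mem_filter !inE andbC.
by rewrite (card_uniqP u) /=; case: (x \in H); case: (y \in H).
Qed.

Lemma bip_edge_of (c : Ct V) (H : {set V}) i : val c = [set H; ~: H] -> i < m ->
  bip_edge c (edge_of i) = ((end1 i \in H) != (end2 i \in H)).
Proof.
move=> vc im; rewrite /bip_edge vc val_edge_of //.
apply/forall_inP/idP => [/(_ H)|hab P].
  by rewrite in_set2 eqxx card2I ?endpoints_neq //; apply.
rewrite in_set2 => /orP [] /eqP ->; rewrite card2I ?endpoints_neq //.
by rewrite !inE; case: (end1 i \in H) hab; case: (end2 i \in H).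
Qed.

Definition compat (c : Ct V) : seq nat :=
  [seq j <- iota 0 p | [forall e in pm j, bip_edge c e]].

Lemma compat_lt c j : j \in compat c -> j < p.
Proof. by rewrite mem_filter mem_iota add0n => /andP[]. Qed.

Definition side_bit (hb : bitseq) (x : V) : bool := nth false hb (index x verts).
Definition compat_bits (hb : bitseq) : seq nat :=
  [seq j <- iota 0 p | all (fun i => pm_bit j i ==>
                               (side_bit hb (end1 i) != side_bit hb (end2 i))) (iota 0 m)].

Variable compat_list : seq (seq nat).
Hypothesis compat_listed :
  all (fun hb => (count id hb == (size verts)./2) ==> (compat_bits hb \in compat_list))
      (bitseqs (size verts)).

Lemma card_verts : #|V| = size verts.
Proof. by rewrite (card_uniq_cover verts_uniq (fun x _ => verts_all x)) count_predT. Qed.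

Lemma compat_in (c : Ct V) : compat c \in compat_list.
Proof.
case: c => cc Hc; have /existsP[H /andP[/eqP vc hH]] := Hc.
set c := exist _ cc Hc; have vc' : val c = [set H; ~: H] by [].
set hb := [seq x \in H | x <- verts].
have hbE x : side_bit hb x = (x \in H).
  by rewrite /side_bit (nth_map x) ?nth_index ?index_mem ?verts_all.
have hb_half : count id hb = (size verts)./2.
  rewrite count_map -(card_uniq_cover verts_uniq (fun x _ => verts_all x)).
  by rewrite -card_verts -(eqP hH) doubleK.
have := allP compat_listed hb (mem_bitseqs (size_map _ _)).
rewrite hb_half eqxx /=; suff -> : compat c = compat_bits hb by [].
apply: eq_in_filter => j; rewrite mem_iota add0n /= => jp.
apply/forall_inP/allP => [Hf i|Ha e eP].
  rewrite mem_iota add0n /= => im; apply/implyP => bit.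
  by rewrite !hbE -(bip_edge_of vc' im); apply: Hf; rewrite edge_of_pm.
have eE : e \in E by apply: (subsetP (pm_sub j)).
have cm := edge_code_lt eE; rewrite -(edge_codeK eE) (bip_edge_of vc' cm) -!hbE.
have := Ha _ (_ : edge_code e \in iota 0 m); rewrite mem_iota add0n cm => /(_ isT)/implyP.
by apply; rewrite -edge_of_pm // edge_codeK.
Qed.

Lemma le_vsum (s : seq (vec V)) w x : w \in s -> w x <= vsum s x.
Proof. by move=> ws; rewrite /vsum ffunE (big_rem w) //= leq_addr. Qed.

Lemma PM_terms (s : seq (vec V)) :
  (forall w, w \in s -> in_PM w) -> (forall e, e \notin E -> vsum s (inl e) = 0) ->
  exists2 L, all (fun l : nat * Ct V => l.1 \in compat l.2) L &
             s = [seq chiEc (pm l.1) l.2 | l <- L].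
Proof.
move=> s_PM s_E; apply: lift_seq => w ws.
have [c [q [/andP[/forall_inP q_bip q_perf] wE]]] := s_PM w ws.
have qE : q \subset E.
  apply/subsetP => e eq; apply: contraT => /s_E s0.
  by have := le_vsum (inl e) ws; rewrite s0 wE /chiEc ffunE eq.
have [j jp qj] := pm_complete qE q_perf.
exists (j, c); last by rewrite wE qj.
by rewrite /= mem_filter mem_iota leq0n add0n jp -qj !andbT; apply/forall_inP.
Qed.

Hypothesis cubic : all (fun x => count (incident x) (iota 0 m) == 3) verts.

Lemma regular_cubic : regular E.
Proof.
exists 3 => x; rewrite (@card_edges (mem [set e in E | x \in val e])); last first.
  by move=> e He; have : e \in [set e in E | x \in val e] := He; rewrite inE => /andP[].
rewrite -(eqP (allP cubic x (verts_all x))); apply: eq_in_count => i.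
by rewrite mem_iota add0n => /= im; rewrite inE edge_of_in // mem_edge_of.
Qed.

Definition covers (n : nat -> nat) (k : nat) : Prop :=
  forall i, i < m -> \sum_(j < p) n j * pm_bit j i = k.

Variable gens : seq (seq nat * nat).
Let g0 := ([::] : seq nat, 0).
Hypothesis gens_cover : all (fun g => [&& all (fun j => j < p) g.1, size g.1 == 3 * g.2 &
  all (fun i => count (pm_bit^~ i) g.1 == g.2) (iota 0 m)]) gens.

Definition gen_combination (n : nat -> nat) (k : nat) : Prop :=
  exists coef : nat -> nat,
    (forall j, j < p -> n j = \sum_(t < size gens) coef t * count_mem j (nth g0 gens t).1) /\
    k = \sum_(t < size gens) coef t * (nth g0 gens t).2.

Hypothesis hilbert_basis : forall n k, covers n k -> gen_combination n k.

Lemma gens_lt t : t < size gens -> all (fun j => j < p) (nth g0 gens t).1.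
Proof. by move=> tl; case/and3P: (allP gens_cover _ (mem_nth g0 tl)). Qed.

Lemma combination_sum (n coef : nat -> nat) (F : nat -> nat) :
  (forall j, j < p -> n j = \sum_(t < size gens) coef t * count_mem j (nth g0 gens t).1) ->
  \sum_(j < p) n j * F j = \sum_(t < size gens) coef t * \sum_(x <- (nth g0 gens t).1) F x.
Proof.
move=> nE.
rewrite (eq_bigr (fun j : 'I_p => \sum_(t < size gens)
           coef t * (count_mem (j : nat) (nth g0 gens t).1 * F j))); last first.
  by move=> j _; rewrite nE // big_distrl; apply: eq_bigr => t _; rewrite mulnA.
rewrite exchange_big; apply: eq_bigr => t _; rewrite -big_distrr /=; congr (_ * _).
by rewrite (sum_by_value F (gens_lt (ltn_ord t))).
Qed.

(* The 1-factorizations of [G] among the generators. *)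
Definition factorizations : seq (seq nat) := [seq g.1 | g <- gens & g.2 == 1].

Definition integral (A : seq (seq nat)) : bool := has (fits^~ A) factorizations.

Definition profiles (A : seq (seq nat)) : seq (nat * seq nat) :=
  [seq (g.2, [seq count (mask_union A mk) g.1 | mk <- masks]) | g <- gens].

(* Some weights [w] give a Hall-type certificate that no cover is compatible
   with [A]: every generator falls short of the weighted Hall bound. *)
Definition certified (A : seq (seq nat)) : bool :=
  let P := profiles A in
  has (fun w => let W := wsum w (count id) in all (fun gp => wdot w gp.2 < gp.1 * W) P)
      mask_weights.

Definition decided (A : seq (seq nat)) : bool := integral A || certified A.

Hypothesis triples_decided :
  all (fun A1 => all (fun A2 => all (fun A3 => decided [:: A1; A2; A3])
    (drop (index A2 compat_list) compat_list))
    (drop (index A1 compat_list) compat_list)) compat_list.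

Lemma decided_reorder (cs : seq (Ct V)) : size cs = 3 ->
  exists2 cs' : seq (Ct V), perm_eq cs' cs & (size cs' == 3) && decided (map compat cs').
Proof.
move=> cs3; pose key c := index (compat c) compat_list.
exists (sort (relpre key leq) cs); first by rewrite perm_sort.
have := sort_sorted (fun c d => leq_total (key c) (key d)) cs.
have := size_sort (relpre key leq) cs; rewrite cs3.
case: (sort _ cs) => [|c1 [|c2 [|c3 []]]] // _ /= /and3P[le12 le23 _].
apply: (allP (allP (allP triples_decided _ (compat_in c1)) _ _)).
  exact: mem_drop_index (compat_in c2) le12.
exact: mem_drop_index (compat_in c3) le23.
Qed.

Section Decomposition.
Variables (v : vec V) (k : nat) (L : seq (nat * Ct V)).
Hypothesis k_gt0 : 0 < k.
Hypothesis v_edges : forall e, v (inl e) = (e \in E).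
Hypothesis L_compat : all (fun l : nat * Ct V => l.1 \in compat l.2) L.
Hypothesis kv_terms : vscale k v = vsum [seq chiEc (pm l.1) l.2 | l <- L].

Let n j := count_mem j (map fst L).

Lemma terms_lt : all (fun j => j < p) (map fst L).
Proof. by rewrite all_map; apply/allP => l /(allP L_compat); apply: compat_lt. Qed.

Lemma kv_coord x : k * v x = \sum_(l <- L) chiEc (pm l.1) l.2 x.
Proof.
by have := congr1 (fun f : vec V => f x) kv_terms; rewrite /vscale /vsum !ffunE big_map.
Qed.

Lemma terms_cover : covers n k.
Proof.
move=> i im; have := kv_coord (inl (edge_of i)).
rewrite v_edges edge_of_in // muln1 => ->.
under eq_bigr => l _ do rewrite ffunE /=.
rewrite -(big_map fst xpredT (fun j => (edge_of i \in pm j) : nat)) (sum_by_value _ terms_lt).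
by apply: eq_bigr => j _; rewrite edge_of_pm.
Qed.

Lemma partition_count c : k * v (inr c) = count_mem c (map snd L).
Proof.
rewrite kv_coord count_map -sum_bool_count; apply: eq_bigr => l _.
by rewrite ffunE /= eq_sym.
Qed.

(* Each generator has size [3 w] and covers every edge [w] times, so [L] has
   [3 k] terms. *)
Lemma size_terms : size L = 3 * k.
Proof.
have [coef [nE kE]] := hilbert_basis terms_cover.
have -> : size L = \sum_(j < p) n j * 1.
  by rewrite -(sum_by_value (fun _ => 1) terms_lt) sum1_size size_map.
rewrite (combination_sum (fun=> 1) nE) kE big_distrr; apply: eq_bigr => t _ /=.
rewrite sum1_size; case/and3P: (allP gens_cover _ (mem_nth g0 (ltn_ord t))) => _ /eqP-> _.
by rewrite mulnCA.
Qed.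

Lemma partition_mass : \sum_c v (inr c) = 3.
Proof.
apply/eqP; rewrite -(eqn_pmul2l k_gt0) big_distrr /=.
under eq_bigr => c _ do rewrite partition_count.
by rewrite -(count_by_value _ predT) count_predT size_map size_terms mulnC.
Qed.

Variable cs : seq (Ct V).
Hypothesis v_partitions : forall c, v (inr c) = count_mem c cs.
Let A := map compat cs.

(* Hall's condition: the terms whose partition is one of the partitions
   selected by [mk] use matchings in the union of their compatibility lists. *)
Lemma hall_bound mk : size mk = size cs ->
  k * count id mk <= \sum_(j < p) n j * mask_union A mk j.
Proof.
move=> smk; set X := mask mk cs.
have X_size : count id mk = size X by rewrite size_mask.
have X_count : size X <= count (mem X) cs.
  have <- : count (mem X) X = size X by apply/eqP; rewrite -all_count; apply/allP.
  exact/leq_count_subseq/mask_subseq.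
have X_terms : k * count (mem X) cs = count (fun l => l.2 \in X) L.
  rewrite -(count_map snd (mem X)) !count_by_value big_distrr /=.
  by apply: eq_bigr => c _; rewrite -partition_count v_partitions.
have X_union : count (fun l => l.2 \in X) L <= count (fun l => mask_union A mk l.1) L.
  apply: sub_in_count => l lL lX; rewrite /mask_union /A -map_mask has_map.
  by apply/hasP; exists l.2 => //; apply: (allP L_compat l lL).
have union_sum :
    count (fun l => mask_union A mk l.1) L = \sum_(j < p) n j * mask_union A mk j.
  by rewrite -(count_map fst (mask_union A mk)) -sum_bool_count (sum_by_value _ terms_lt).
rewrite X_size -union_sum; apply: leq_trans X_union.
by rewrite -X_terms leq_mul2l X_count orbT.
Qed.

(* Summing Hall's condition with the weights [w] contradicts a certificate:
   along the decomposition of [n] into generators, each generator falls short. *)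
Lemma not_certified : size cs = 3 -> ~~ certified A.
Proof.
move=> cs3; apply/negP => /hasP[w _ /allP cert].
have [coef [nE kE]] := hilbert_basis terms_cover.
pose G j := wsum w (fun mk => mask_union A mk j).
have below : k * wsum w (count id) <= \sum_(j < p) n j * G j.
  have -> : \sum_(j < p) n j * G j = wsum w (fun mk => \sum_(j < p) n j * mask_union A mk j).
    rewrite -(sum_wsum _ w (fun (j : 'I_p) mk => n j * mask_union A mk j)).
    by apply: eq_bigr => j _; rewrite wsum_mul.
  rewrite wsum_mul; apply: leq_wsum => mk mk_in.
  by apply: hall_bound; rewrite cs3 size_masks.
have short t : t < size gens ->
    \sum_(x <- (nth g0 gens t).1) G x < (nth g0 gens t).2 * wsum w (count id).
  move=> tl; rewrite sum_wsum (eq_wsum _ (fun mk => sum_bool_count _ _)).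
  exact: cert (map_f _ (mem_nth g0 tl)).
have above : \sum_(t < size gens) coef t * \sum_(x <- (nth g0 gens t).1) G x
             + \sum_(t < size gens) coef t <= k * wsum w (count id).
  rewrite kE big_distrl -big_split; apply: leq_sum => t _ /=.
  by rewrite -mulnSr -mulnA leq_mul2l short ?orbT.
have coef_pos : 0 < \sum_(t < size gens) coef t.
  rewrite lt0n; apply: contraTneq k_gt0 => /eqP; rewrite sum_nat_eq0 => /forall_inP c0.
  by rewrite kE big1 // => t _; rewrite (eqP (c0 t isT)).
have := leq_trans above below; rewrite (combination_sum G nE).
by rewrite -[X in _ <= X]addn0 leq_add2l leqNgt coef_pos.
Qed.

Lemma integral_Ncomb : integral A -> Ncomb (@in_PM V) v.
Proof.
case/hasP=> F /mapP[g]; rewrite mem_filter => /andP[/eqP g1 gG] ->.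
case/fitsP=> sg perm_sg; rewrite /A => fit.
have size_sg : size sg = size cs by move: fit; rewrite all2E size_map => /andP[/eqP].
have /and3P[_ _ g_cover] := allP gens_cover g gG.
exists [seq chiEc (pm l.1) l.2 | l <- zip sg cs]; split.
  move=> w /mapP[l lz ->]; have l_compat := all2_zip fit lz.
  exists l.2, (pm l.1); split => //; apply/andP; split.
    by move: l_compat; rewrite mem_filter => /andP[].
  exact: pm_perfect_matching (compat_lt l_compat).
apply/ffunP => -[e|c]; rewrite /vsum ffunE big_map.
  under eq_bigr => l _ do rewrite ffunE /=.
  rewrite v_edges -(big_map fst xpredT (fun j => (e \in pm j) : nat)).
  rewrite -/(unzip1 _) unzip1_zip ?size_sg // (perm_big _ perm_sg) /= sum_bool_count.
  case eE: (e \in E); last first.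
    apply/esym/eqP; rewrite eqn0Ngt -has_count; apply/hasP => -[j _ ej].
    by move: eE; rewrite (subsetP (pm_sub j) e ej).
  rewrite -(edge_codeK eE) (eq_count (a2 := pm_bit^~ (edge_code e))).
    rewrite g1 in g_cover; apply/esym/eqP/(allP g_cover).
    by rewrite mem_iota edge_code_lt.
  by move=> j; rewrite /= edge_of_pm ?edge_code_lt.
under eq_bigr => l _ do rewrite ffunE /= eq_sym.
rewrite -(big_map snd xpredT (fun d => (d == c) : nat)) -/(unzip2 _) unzip2_zip ?size_sg //.
by rewrite sum_bool_count v_partitions.
Qed.
End Decomposition.

Theorem cubic_B_factorizable : B_factorizable E.
Proof.
split; first exact: regular_cubic.
move=> v [k [k_gt0 [s [s_PM kv]]]] v_edges.
have s_E e : e \notin E -> vsum s (inl e) = 0.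
  by move=> eE; rewrite -kv /vscale ffunE v_edges (negbTE eE) muln0.
have [L L_compat sL] := PM_terms s_PM s_E; rewrite {}sL in kv.
have [cs size_cs v_cs] := multiset_of_counts (fun c => v (inr c)).
rewrite (partition_mass k_gt0 v_edges L_compat kv) in size_cs.
have [cs' perm_cs /andP[/eqP size_cs' /orP dec]] := decided_reorder size_cs.
have v_partitions c : v (inr c) = count_mem c cs' by rewrite -v_cs (permP perm_cs).
case: dec => [|certA]; first exact: (integral_Ncomb v_edges v_partitions).
by have := not_certified k_gt0 v_edges L_compat kv v_partitions size_cs'; rewrite certA.
Qed.
End CubicGraph.

Definition edge_list (V : eqType) (verts : seq V) (adj : rel V) : seq (V * V) :=
  [seq xy <- [seq (x, y) | x <- verts, y <- drop (index x verts).+1 verts] | adj xy.1 xy.2].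

Definition perfect_matchings (V : finType) (verts : seq V) (elist : seq (V * V)) (x0 : V)
    : seq bitseq :=
  [seq bb <- bitseqs (size elist) | perfect_bits verts elist x0 bb].

Definition compat_lists (V : finType) (verts : seq V) (elist : seq (V * V)) (x0 : V)
    (pmbits : seq bitseq) : seq (seq nat) :=
  undup [seq compat_bits verts elist x0 pmbits hb
        | hb <- bitseqs (size verts) & count id hb == (size verts)./2].

Lemma card_pair (V : finType) (x y : V) : x != y -> #|[set x; y]| == 2.
Proof. by move=> xy; rewrite cards2 xy. Qed.

Definition pair_edge (V : finType) (x y : V) (xy : x != y) : Kt V :=
  exist _ [set x; y] (card_pair xy).

(* The 3-cube.  Its nine perfect matchings are indexed along [cube_pms]; the
   generators are its four 1-factorizations and one family of six matchings
   covering every edge twice. *)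
Definition cube_verts : seq cubeV :=
  let bits := [:: false; true] in
  [seq (ab, c) | ab <- [seq (a, b) | a <- bits, b <- bits], c <- bits].
Definition cx0 : cubeV := (false, false, false).
Definition cube_elist : seq (cubeV * cubeV) :=
  Eval vm_compute in edge_list cube_verts cube_adj.
Definition cube_pms : seq bitseq :=
  Eval vm_compute in perfect_matchings cube_verts cube_elist cx0.
Definition cube_compat : seq (seq nat) :=
  Eval vm_compute in compat_lists cube_verts cube_elist cx0 cube_pms.

Definition cube_gens : seq (seq nat * nat) :=
  [:: ([:: 0; 4; 8], 1); ([:: 0; 5; 6], 1); ([:: 1; 3; 8], 1); ([:: 2; 4; 7], 1);
      ([:: 1; 2; 3; 5; 6; 7], 2)].

(* Solving the twelve edge equations, a cover is a combination of the
   generators, with coefficients depending on whether [n 5 <= n 0]. *)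
Lemma cube_hilbert_basis n k :
  covers cube_elist cube_pms n k -> gen_combination cube_pms cube_gens n k.
Proof.
move=> cover.
have edge_eq i : i < 12 -> \sum_(0 <= j < 9) n j * pm_bit cube_pms j i = k.
  by move=> /cover; rewrite big_mkord.
move: (edge_eq 0 isT) (edge_eq 1 isT) (edge_eq 2 isT) (edge_eq 3 isT) (edge_eq 4 isT)
      (edge_eq 5 isT) (edge_eq 6 isT) (edge_eq 7 isT) (edge_eq 8 isT) (edge_eq 9 isT)
      (edge_eq 10 isT) (edge_eq 11 isT); rewrite unlock /= => *.
have [le50|lt05] := leqP (n 5) (n 0).
  exists (nth 0 [:: n 0 - n 5; n 5; n 1; n 2; 0]); split; last first.
    by rewrite !big_ord_recr big_ord0 /=; lia.
  move=> j; do 9 (case: j => [_|j]; first by rewrite !big_ord_recr big_ord0 /=; lia).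
  by [].
exists (nth 0 [:: 0; n 0; n 1 - (n 5 - n 0); n 2 - (n 5 - n 0); n 5 - n 0]); split; last first.
  by rewrite !big_ord_recr big_ord0 /=; lia.
move=> j; do 9 (case: j => [_|j]; first by rewrite !big_ord_recr big_ord0 /=; lia).
by [].
Qed.

Lemma cube_verts_all (x : cubeV) : x \in cube_verts.
Proof. by case: x => [[[] []] []]. Qed.

Definition cube_e0 : Kt cubeV := pair_edge (isT : cx0 != (false, false, true)).

Lemma cube_B_factorizable : B_factorizable cube_edges.
Proof.
apply: (cubic_B_factorizable (x0 := cx0) (compat_list := cube_compat) cube_e0 cube_verts_all
          _ _ _ _ _ _ _ _ _ cube_hilbert_basis).
all: by vm_compute.
Qed.

(* The pentagonal prism, with eleven perfect matchings, five 1-factorizations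
   and again one family of six matchings covering every edge twice. *)
Definition prism_verts : seq prismV :=
  [seq (s, i) | s <- [:: false; true],
                i <- [:: @Ordinal 5 0 isT; @Ordinal 5 1 isT; @Ordinal 5 2 isT;
                         @Ordinal 5 3 isT; @Ordinal 5 4 isT]].
Definition px0 : prismV := (false, @Ordinal 5 0 isT).
Definition prism_elist : seq (prismV * prismV) :=
  Eval vm_compute in edge_list prism_verts prism_adj.
Definition prism_pms : seq bitseq :=
  Eval vm_compute in perfect_matchings prism_verts prism_elist px0.
Definition prism_compat : seq (seq nat) :=
  Eval vm_compute in compat_lists prism_verts prism_elist px0 prism_pms.

Definition prism_gens : seq (seq nat * nat) :=
  [:: ([:: 0; 3; 9], 1); ([:: 0; 5; 6], 1); ([:: 1; 3; 8], 1); ([:: 1; 4; 7], 1);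
      ([:: 2; 4; 6], 1); ([:: 0; 1; 3; 4; 6; 10], 2)].

Lemma prism_hilbert_basis n k :
  covers prism_elist prism_pms n k -> gen_combination prism_pms prism_gens n k.
Proof.
move=> cover.
have edge_eq i : i < 15 -> \sum_(0 <= j < 11) n j * pm_bit prism_pms j i = k.
  by move=> /cover; rewrite big_mkord.
move: (edge_eq 0 isT) (edge_eq 1 isT) (edge_eq 2 isT) (edge_eq 3 isT) (edge_eq 4 isT)
      (edge_eq 5 isT) (edge_eq 6 isT) (edge_eq 7 isT) (edge_eq 8 isT) (edge_eq 9 isT)
      (edge_eq 10 isT) (edge_eq 11 isT) (edge_eq 12 isT) (edge_eq 13 isT)
      (edge_eq 14 isT).
rewrite unlock /= => *.
exists (nth 0 [:: n 9; n 5; n 8; n 7; n 2; n 10]); split; last first.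
  by rewrite !big_ord_recr big_ord0 /=; lia.
move=> j; do 11 (case: j => [_|j]; first by rewrite !big_ord_recr big_ord0 /=; lia).
by [].
Qed.

Lemma prism_verts_all (x : prismV) : x \in prism_verts.
Proof.
case: x => s [i lt_i5]; case: s; do 5 (case: i lt_i5 => [|i] lt_i5; [by []|]); by [].
Qed.

Definition prism_e0 : Kt prismV := pair_edge (isT : px0 != (true, @Ordinal 5 0 isT)).

Lemma prism_B_factorizable : B_factorizable prism_edges.
Proof.
apply: (cubic_B_factorizable (x0 := px0) (compat_list := prism_compat) prism_e0 prism_verts_all
          _ _ _ _ _ _ _ _ _ prism_hilbert_basis).
all: by vm_compute.
Qed.

Theorem mainTheorem9 :
  B_factorizable cube_edges /\ B_factorizable prism_edges.
Proof. exact: (conj cube_B_factorizable prism_B_factorizable). Qed.
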